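(* Let $G_1,G_2$ be directed graphs on $[n]$ without self-loops with $\mathcal{P}(G_1)=\mathcal{P}(G_2)$, and let $\pi$ be a permutation of $[n]$ such that $I+B_{G_2}=P_\pi(I+B_{G_1})$. Write $\pi=c_1c_2\cdots c_k$ as a product of disjoint cycles $c_j=(i^j_1,i^j_2,\dots,i^j_{n_j})$ with $n_j\ge2$ (fixed points omitted). Then for each $j\in[k]$, $x_{i^j_1}\to x_{i^j_2}\to\cdots\to x_{i^j_{n_j}}\to x_{i^j_1}$ is a directed cycle in $G_1$, and $x_{i^j_1}\leftarrow x_{i^j_2}\leftarrow\cdots\leftarrow x_{i^j_{n_j}}\leftarrow x_{i^j_1}$ is a directed cycle in $G_2$.
   Context: For a directed graph $G$ on $[n]$ (vertex $i$ identified with variable $x_i$) without self-loops, $B_G\in\{0,1\}^{n\times n}$ has $[B_G]_{ij}=1$ iff there is an edge $j\to i$. $P_\pi$ is the permutation matrix whose $i$-th row is the standard basis row vector $u_{\pi(i)}$, so the $i$-th row of $P_\pi A$ is the $\pi(i)$-th row of $A$. A cycle $(i_1,\dots,i_\ell)$ of a permutation maps $i_r\mapsto i_{r+1}$ and $i_\ell\mapsto i_1$. $\mathcal{P}(G)$ is the set of all distributions of $\mathbf{x}=(I-W)^{-1}\mathbf{e}$ where $W$ has nonzero pattern exactly that of $B_G$, $I-W$ is invertible, and $\mathbf{e}$ has jointly independent components with at most one Gaussian. *)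

From HB Require Import structures.
From mathcomp Require Import all_boot all_order all_algebra all_fingroup.
From mathcomp Require Import all_classical all_reals all_analysis.
From mathcomp Require Import normal_distribution.
Set Implicit Arguments. Unset Strict Implicit. Unset Printing Implicit Defensive.
Import Order.TTheory GRing.Theory Num.Theory.
Local Open Scope classical_set_scope.
Local Open Scope ring_scope.

(* A directed graph on [n] = 'I_n: G i j means there is an edge i -> j. *)
Definition digraph (n : nat) := rel 'I_n.

Definition no_self_loops n (G : digraph n) := forall i, ~~ G i i.

Definition adjB (R : pzRingType) n (G : digraph n) : 'M[R]_n :=
  \matrix_(i, j) (G j i)%:R.

(* P_pi: i-th row is u_{pi(i)}, i.e. (P_pi) i j = (pi i == j).
   This is MathComp's perm_mx. *)
Definition Pperm (R : pzRingType) n (pi : 'S_n) : 'M[R]_n := perm_mx pi.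

Definition has_pattern (R : realType) n (G : digraph n) (W : 'M[R]_n) :=
  forall i j, (W i j != 0) = G j i.

Definition mutually_independent (R : realType) d (T : measurableType d)
  (P : probability T R) n (e : 'I_n -> T -> R) :=
  forall S : {set 'I_n}, forall A : 'I_n -> set R, (forall i, measurable (A i)) ->
    P (\bigcap_(i in [set i | i \in S]) (e i @^-1` A i)) =
    (\prod_(i in S) P (e i @^-1` A i))%E.

Definition is_gaussian (R : realType) d (T : measurableType d)
  (P : probability T R) (X : T -> R) :=
  exists (m s : R), s != 0 /\
    forall A : set R, measurable A -> P (X @^-1` A) = normal_prob m s A.

(* A distribution on R^n is represented by its joint CDF. *)
Definition joint_cdf (R : realType) (n : nat) := ('I_n -> R) -> \bar R.

Definition model_class (R : realType) n (G : digraph n) : set (joint_cdf R n) :=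
  [set F | exists (d : measure_display) (T : measurableType d)
      (P : probability T R) (W : 'M[R]_n) (e : 'I_n -> T -> R),
      [/\ has_pattern G W, (1%:M - W) \in unitmx,
          (forall i, measurable_fun setT (e i)) /\ mutually_independent P e,
          (forall i j, is_gaussian P (e i) -> is_gaussian P (e j) -> i = j) &
          let x := fun w => invmx (1%:M - W) *m (\col_i e i w) in
          F = fun t => P [set w | forall i, x w i ord0 <= t i]]].

From HB Require Import structures.
From mathcomp Require Import all_boot all_order all_algebra all_fingroup.
From mathcomp Require Import all_classical all_reals all_analysis.

Set Implicit Arguments.
Unset Strict Implicit.
Unset Printing Implicit Defensive.

Import Order.TTheory GRing.Theory Num.Theory.
Local Open Scope ring_scope.

(* Row [i] of [I + B_{G2}] is row [pi i] of [I + B_{G1}].  For a vertex [y]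
   moved by [pi], the diagonal entry [(y, y)] then forces the edge
   [y -> pi y] in [G1], and the entry [(y, pi y)] forces the edge
   [pi y -> y] in [G2].  The cycles of the statement are orbits of [pi],
   whose consecutive vertices are exactly such pairs [y, pi y]. *)

Lemma unit_adjB_entry (R : nzRingType) n (G : digraph n) :
  no_self_loops G -> forall i j, (1%:M + adjB R G) i j = ((i == j) || G j i)%:R.
Proof.
move=> noloop i j; rewrite !mxE.
by case: eqVneq => [->|_]; rewrite ?(negbTE (noloop j)) ?add0r ?addr0.
Qed.

Lemma perm_unit_adjB_pattern (R : nzRingType) n (G1 G2 : digraph n) (pi : 'S_n) :
    no_self_loops G1 -> no_self_loops G2 ->
    1%:M + adjB R G2 = Pperm R pi *m (1%:M + adjB R G1) ->
  forall i j, ((i == j) || G2 j i) = ((pi i == j) || G1 j (pi i)).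
Proof.
move=> noloop1 noloop2 hpi i j.
have := congr1 (fun A : 'M[R]_n => A i j) hpi.
rewrite /Pperm -row_permE [in RHS]mxE !unit_adjB_entry //.
by case: (_ || _); case: (_ || _) => //= /eqP;
  rewrite ?mulr1n ?mulr0n ?oner_eq0 // eq_sym oner_eq0.
Qed.

Lemma perm_moved_edges (R : nzRingType) n (G1 G2 : digraph n) (pi : 'S_n) :
    no_self_loops G1 -> no_self_loops G2 ->
    1%:M + adjB R G2 = Pperm R pi *m (1%:M + adjB R G1) ->
  forall y, pi y != y -> G1 y (pi y) && G2 (pi y) y.
Proof.
move=> noloop1 noloop2 hpi y moved.
have pattern := perm_unit_adjB_pattern noloop1 noloop2 hpi.
have := pattern y y; have := pattern y (pi y).
by rewrite !eqxx (negbTE moved) eq_sym (negbTE moved) /= => -> <-.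
Qed.

Lemma inj_iter_fixed T (f : T -> T) i x :
  injective f -> f (iter i f x) = iter i f x -> f x = x.
Proof. by move=> f_inj; elim: i => [|i IHi] //= /f_inj. Qed.

Lemma perm_orbit_cycle (T : finType) (s : {perm T}) (e : rel T) :
    (forall y, s y != y -> e y (s y)) ->
  forall x, s x != x -> path.cycle e (traject s x (fingraph.order s x)).
Proof.
move=> edge x moved.
have all_moved : all (fun y => s y != y) (traject s x (fingraph.order s x)).
  apply/allP => _ /trajectP [i _ ->]; apply: contra moved => /eqP.
  by move/(inj_iter_fixed (@perm_inj _ s))/eqP.
apply: sub_in_cycle all_moved (cycle_orbit (@perm_inj _ s) x) => a b /= ?? /eqP <-.
exact: edge.
Qed.

Theorem proposition3 (R : realType) (n : nat) (G1 G2 : digraph n)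
  (hG1 : no_self_loops G1) (hG2 : no_self_loops G2)
  (hP : model_class (R:=R) G1 = model_class (R:=R) G2)
  (pi : 'S_n)
  (hpi : 1%:M + adjB R G2 = Pperm R pi *m (1%:M + adjB R G1)) :
  forall x : 'I_n, pi x != x ->
    let c := traject (fun y => pi y) x (fingraph.order (fun y => pi y) x) in
    path.cycle G1 c /\ path.cycle (fun a b => G2 b a) c.
Proof.
have edges := perm_moved_edges hG1 hG2 hpi.
by move=> x moved c; split; apply: perm_orbit_cycle moved => y /edges /andP[].
Qed.
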